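(* Let $(h,n)=(3,2)$ and $U=\{id\}\times S_2\leq S_3\times S_2$. Then $U$ is a neutrality group with respect to $(3,2)$ but not a symmetry group with respect to $(3,2)$.
   Context: Permutations compose as $(\sigma\tau)(x)=\sigma(\tau(x))$. Let $G=S_h\times S_n$ and $\mathcal{P}=(S_n)^h$ (preference profiles), with $G$ acting by $(p^{(\varphi,\psi)})_i=\psi\,p_{\varphi^{-1}(i)}$. A social preference function (SPF) is any $F:\mathcal{P}\to S_n$; its symmetry group is $G(F)=\{(\varphi,\psi)\in G: F(p^{(\varphi,\psi)})=\psi F(p)\ \forall p\}$ and its neutrality group is $G_2(F)=G(F)\cap(\{id\}\times S_n)$. $U$ is a symmetry group (resp. neutrality group) with respect to $(h,n)$ if $U=G(F)$ (resp. $U=G_2(F)$) for some SPF $F$. *)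

From mathcomp Require Import all_boot all_fingroup.
Set Implicit Arguments. Unset Strict Implicit. Unset Printing Implicit Defensive.
Local Open Scope group_scope.

(* Convention: in MathComp, (s * t) x = t (s x).  Hence the paper's
   function composition  sigma o tau  is  tau * sigma  here. *)
Definition pcomp (n : nat) (s t : 'S_n) : 'S_n := t * s.

Lemma pcompE n (s t : 'S_n) x : pcomp s t x = s (t x).
Proof. by rewrite /pcomp permM. Qed.

Definition profile (h n : nat) := {ffun 'I_h -> 'S_n}.

Definition act_prof (h n : nat) (g : 'S_h * 'S_n) (p : profile h n) : profile h n :=
  [ffun i => pcomp g.2 (p (g.1^-1 i))].

Definition sym_group (h n : nat) (F : profile h n -> 'S_n) : {set 'S_h * 'S_n} :=
  [set g | [forall p : profile h n, F (act_prof g p) == pcomp g.2 (F p)]].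

Definition neut_group (h n : nat) (F : profile h n -> 'S_n) : {set 'S_h * 'S_n} :=
  sym_group F :&: [set g | g.1 == 1].

Definition is_symmetry_group (h n : nat) (U : {set 'S_h * 'S_n}) : Prop :=
  exists F : profile h n -> 'S_n, sym_group F = U.

Definition is_neutrality_group (h n : nat) (U : {set 'S_h * 'S_n}) : Prop :=
  exists F : profile h n -> 'S_n, neut_group F = U.

(* A dictator is neutral and only the identity on voters preserves it, so
   {id} x S_2 is a neutrality group.  Conversely, if G(F) contains
   {id} x S_2 then F commutes with reversing all preferences.  Up to such a
   reversal, a profile of three voters over two alternatives is unanimous or
   has a single dissenter.  The three single-dissenter profiles take values
   in the two-element S_2, so two of them get the same social preference, and
   then the transposition of those two voters lies in G(F). *)
From Pilot Require Import Defs.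
From mathcomp Require Import all_boot all_fingroup zify.
Set Implicit Arguments. Unset Strict Implicit. Unset Printing Implicit Defensive.
Local Open Scope group_scope.

Lemma sym_groupP h n (F : profile h n -> 'S_n) (g : 'S_h * 'S_n) :
  reflect (forall p, F (act_prof g p) = F p * g.2) (g \in sym_group F).
Proof. by rewrite inE; apply: (iffP forallP) => FgP p; apply/eqP. Qed.

(* Unqualified, [pcomp] would resolve to ssrfun's partial composition. *)
Lemma act_prof1 h n (p : profile h n) : act_prof (1, 1) p = p.
Proof. by apply/ffunP => i; rewrite ffunE invg1 perm1 /Defs.pcomp mulg1. Qed.

Lemma act_prof_commute h n (phi : 'S_h) (psi : 'S_n) (p : profile h n) :
  act_prof (phi, 1) (act_prof (1, psi) p) = act_prof (1, psi) (act_prof (phi, 1) p).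
Proof. by apply/ffunP => i; rewrite !ffunE invg1 !perm1 /Defs.pcomp !mulg1. Qed.

Lemma neut_group_dictator h n (i : 'I_h) :
  neut_group (fun p : profile h n => p i) = [set g | g.1 == 1].
Proof.
apply/setP => -[phi psi]; rewrite !inE /= andbC.
case: eqP => [-> /=|//]; apply/forallP => p.
by rewrite ffunE invg1 perm1.
Qed.

Lemma tperm_neq1 (T : finType) (x y : T) : x != y -> tperm x y != 1.
Proof. by apply: contra => /eqP/permP/(_ x); rewrite tpermL perm1 => ->. Qed.

Definition swap2 : 'S_2 := tperm ord0 ord_max.

Lemma swap2_neq1 : swap2 != 1.
Proof. exact: tperm_neq1. Qed.

Lemma S2_cases (s : 'S_2) : s = 1 \/ s = swap2.
Proof.
have S2E : [set: 'S_2] = [set 1; swap2].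
  apply/esym/eqP; rewrite eqEcard subsetT cardsT card_Sn cards2.
  by rewrite eq_sym swap2_neq1.
by apply/set2P; rewrite -S2E inE.
Qed.

Lemma S2_neq (x c : 'S_2) : x != c -> x = swap2 * c.
Proof.
have [E|E] := S2_cases (x * c^-1); first by rewrite eq_mulgV1 E eqxx.
by rewrite -E mulgKV.
Qed.

Definition dissent h (D : {set 'I_h}) : profile h 2 :=
  [ffun i => if i \in D then swap2 else 1].

Lemma profile_dissentE h (p : profile h 2) (c : 'S_2) :
  p = act_prof (1, c) (dissent [set i | p i != c]).
Proof.
apply/ffunP => i; rewrite !ffunE inE invg1 perm1 /Defs.pcomp.
by case: eqP => [->|/eqP/S2_neq//]; rewrite mul1g.
Qed.

Lemma exists_dissent_le_half h (p : profile h 2) :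
  exists c : 'S_2, #|[set i | p i != c]| <= h./2.
Proof.
set A := [set i | p i != 1].
have [le_A|lt_A] := leqP #|A| h./2; first by exists 1.
exists swap2; have -> : [set i | p i != swap2] = ~: A.
  apply/setP => i; rewrite !inE.
  by have [->|->] := S2_cases (p i); rewrite eqxx ?swap2_neq1 // eq_sym swap2_neq1.
by move: (cardsC A); rewrite card_ord; lia.
Qed.

Lemma act_voters_dissent0 h (phi : 'S_h) :
  act_prof (phi, 1) (dissent set0) = dissent set0.
Proof. by apply/ffunP => i; rewrite !ffunE !inE /Defs.pcomp mulg1. Qed.

Lemma act_voters_dissent1 h (phi : 'S_h) (k : 'I_h) :
  act_prof (phi, 1) (dissent [set k]) = dissent [set phi k].
Proof.
by apply/ffunP => i; rewrite !ffunE !inE /Defs.pcomp mulg1 (canF_eq (permKV phi)).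
Qed.

Section ThreeVotersTwoAlternatives.

Variable F : profile 3 2 -> 'S_2.
Hypothesis F_neutral : (1, swap2) \in sym_group F.

Lemma neutral_translate (c : 'S_2) p : F (act_prof (1, c) p) = F p * c.
Proof.
have [->|->] := S2_cases c; first by rewrite act_prof1 mulg1.
exact: (sym_groupP _ _ F_neutral).
Qed.

Variables i j : 'I_3.
Hypothesis F_ij : F (dissent [set i]) = F (dissent [set j]).

Lemma tperm_voters_sym : (tperm i j, 1) \in sym_group F.
Proof.
apply/sym_groupP => p /=; rewrite /Defs.pcomp mulg1.
have [c le_c] := exists_dissent_le_half p.
rewrite [p](profile_dissentE p c) act_prof_commute !neutral_translate.
congr (_ * c); move: le_c.
rewrite leq_eqVlt ltnS leqn0 cards_eq0 => /orP[/cards1P[k ->] | /eqP ->].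
- by rewrite act_voters_dissent1; case: tpermP => [->|->|//]; rewrite F_ij.
- by rewrite act_voters_dissent0.
Qed.

End ThreeVotersTwoAlternatives.

Lemma neutral_voter_symmetry (F : profile 3 2 -> 'S_2) :
  (1, swap2) \in sym_group F -> exists2 phi : 'S_3, phi != 1 & (phi, 1) \in sym_group F.
Proof.
move=> F_neutral.
have : ~~ injectiveb (fun k : 'I_3 => F (dissent [set k])).
  by apply/injectiveP => /leq_card; rewrite card_ord card_Sn.
case/injectivePn => i [j neq_ij F_ij].
by exists (tperm i j); [exact: tperm_neq1 | exact: tperm_voters_sym].
Qed.

Theorem mainTheorem9 :
  let U : {set 'S_3 * 'S_2} := [set g | g.1 == 1] in
  is_neutrality_group U /\ ~ is_symmetry_group U.
Proof.
move=> U; split; first by exists (fun p => p ord0); exact: neut_group_dictator.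
case=> F symF.
have F_neutral : (1, swap2) \in sym_group F by rewrite symF inE.
have [phi phi_neq1] := neutral_voter_symmetry F_neutral.
by rewrite symF inE /= (negbTE phi_neq1).
Qed.
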